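(* Let $W$ be an eventually periodic subset of $\mathbb{Z}^d$ with periods $u_1,\dots,u_d$, and let $\mathscr{W}_1,\mathcal{W}$ be as defined in the context. Suppose $\mathscr{W}_1$ is nonempty and $\pi(\mathcal{W}\cup\mathscr{W}_1)=\mathbb{Z}^d/\mathcal{L}$. Then $W$ has a minimal complement in $\mathbb{Z}^d$.
   Context: $d\geqslant1$, $\mathbb{N}=\{0,1,2,\dots\}$. Let $u_1,\dots,u_d\in\mathbb{Z}^d$ satisfy no nontrivial $\mathbb{Z}$-linear relation, $\mathcal{L}=\mathbb{Z}u_1+\dots+\mathbb{Z}u_d$, $P=\mathbb{N}u_1+\dots+\mathbb{N}u_d$, $\pi:\mathbb{Z}^d\to\mathbb{Z}^d/\mathcal{L}$ the quotient map. A nonempty $X\subseteq\mathbb{Z}^d$ is eventually periodic with periods $u_1,\dots,u_d$ if $X\subseteq F+P$ for some nonempty finite $F\subseteq\mathbb{Z}^d$ and $x+P\subseteq X$ for all but finitely many $x\in X$. For such $W$: $\mathscr{W}=\{w\in W:w+P\not\subseteq W\}$; $\mathcal{W}=\{w\in W\setminus\mathscr{W}:(w-P)\cap(W\setminus\mathscr{W})=\{w\}\}$; $\mathscr{W}_1$ is the set of elements of $\mathscr{W}$ congruent modulo $\mathcal{L}$ to no element of $\mathcal{W}$. A nonempty $M\subseteq\mathbb{Z}^d$ is a complement of $W$ if $M+W=\mathbb{Z}^d$, and a minimal complement if no proper subset of $M$ is a complement of $W$. *)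

From mathcomp Require Import all_boot all_order all_algebra.
Set Implicit Arguments. Unset Strict Implicit. Unset Printing Implicit Defensive.
Import Order.TTheory GRing.Theory Num.Theory.
Local Open Scope ring_scope.

Definition vec (d : nat) := 'rV[int]_d.
Definition vset (d : nat) := vec d -> Prop.

Section Defs.
Variables (d : nat) (u : 'I_d -> vec d).

Definition Zindep : Prop :=
  forall c : 'I_d -> int, \sum_(i < d) c i *: u i = 0 -> forall i, c i = 0.

Definition inL (x : vec d) : Prop :=
  exists c : 'I_d -> int, x = \sum_(i < d) c i *: u i.

Definition inP (x : vec d) : Prop :=
  exists c : 'I_d -> nat, x = \sum_(i < d) (c i)%:Z *: u i.

Definition transl_P_sub (X : vset d) (x : vec d) : Prop :=
  forall p, inP p -> X (x + p).

Definition eventually_periodic (X : vset d) : Prop :=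
  (exists x, X x) /\
  (exists F : seq (vec d), F != [::] /\
     forall x, X x -> exists2 f, f \in F & inP (x - f)) /\
  (exists E : seq (vec d),
     forall x, X x -> ~ transl_P_sub X x -> x \in E).

Definition scrW (W : vset d) (w : vec d) : Prop :=
  W w /\ ~ transl_P_sub W w.

Definition calW (W : vset d) (w : vec d) : Prop :=
  (W w /\ ~ scrW W w) /\
  (forall v, (inP (w - v) /\ (W v /\ ~ scrW W v)) <-> v = w).

Definition scrW1 (W : vset d) (w : vec d) : Prop :=
  scrW W w /\ forall v, calW W v -> ~ inL (w - v).

End Defs.

Definition is_complement (d : nat) (W M : vset d) : Prop :=
  (exists m, M m) /\ forall x : vec d, exists m w, M m /\ W w /\ x = m + w.

Definition is_minimal_complement (d : nat) (W M : vset d) : Prop :=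
  is_complement W M /\
  ~ (exists M' : vset d, (forall x, M' x -> M x) /\ (exists x, M x /\ ~ M' x)
                         /\ is_complement W M').

(* Reduce the coefficients of lattice points modulo a prime p larger than all
   coefficients of differences of exceptional elements of W (those w with
   w + P not contained in W).  The sets M_r of lattice points with residues in
   r are complements for r the full residue group, by the covering hypothesis;
   take r minimal.  For rho in r there is a point x reached from M_r only
   through the class rho and only via exceptional elements of W: by minimality
   of r when r has other classes, and x = s0 from scrW1 otherwise, because
   every w with w + P in W is congruent to an element of calW.  Representing x
   and m0 + w through M_r and through a subcomplement M' then forces two
   exceptional elements to differ by a lattice point whose coefficients are
   divisible by p yet smaller than p, so every m0 of class rho lies in M'. *)

From mathcomp Require Import all_boot all_order all_algebra.
From mathcomp Require Import zify.
From Stdlib Require Import Classical.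
Import GRing.Theory Num.Theory.
Local Open Scope ring_scope.
Set Implicit Arguments. Unset Strict Implicit.

Lemma ex_setD1_minimal (T : finType) (Pr : {set T} -> Prop) :
  Pr setT -> exists2 r, Pr r & forall x, x \in r -> ~ Pr (r :\ x).
Proof.
suff min_below : forall n (r : {set T}), #|r| = n -> Pr r ->
    exists2 r', Pr r' & forall x, x \in r' -> ~ Pr (r' :\ x).
  by move=> PrT; apply: min_below erefl PrT.
elim/ltn_ind => n IH r card_r Pr_r.
case: (classic (exists2 x, x \in r & Pr (r :\ x))) => [[x xr Pr_rx] | min_r].
  by apply: IH _ _ erefl Pr_rx; rewrite -card_r; apply/proper_card/properD1.
by exists r => // x xr Pr_rx; apply: min_r; exists x.
Qed.

Lemma ex_max_measure (T : Type) (Q : T -> Prop) (f : T -> nat) (K : nat) (t0 : T) :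
  Q t0 -> (forall t, Q t -> (f t <= K)%N) ->
  exists2 t, Q t & forall t', Q t' -> (f t' <= f t)%N.
Proof.
move=> Qt0 leK; suff max_above : forall n t, (K - f t <= n)%N -> Q t ->
    exists2 t', Q t' & forall t'', Q t'' -> (f t'' <= f t')%N.
  exact: max_above (leqnn _) Qt0.
elim=> [|n IH] t leKn Qt.
  by exists t => // t' /leK; lia.
case: (classic (exists2 t', Q t' & (f t < f t')%N)) => [[t' Qt' ltt'] | max_t].
  by have leKt' := leK _ Qt'; apply: IH Qt'; lia.
exists t => // t' Qt'; rewrite leqNgt; apply/negP => ltt'.
by apply: max_t; exists t'.
Qed.

Section Residues.
Variables (p d : nat).
Hypothesis p_prime : prime p.

Definition res (c : 'I_d -> int) : {ffun 'I_d -> 'F_p} := [ffun i => (c i)%:~R].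

Lemma intr_modz_Fp (z : int) : ((z %% p)%Z%:~R : 'F_p) = z%:~R.
Proof. by rewrite intrB intrM -pmulrn pchar_Fp_0 // mulr0 subr0. Qed.

Lemma res_below (rho : {ffun 'I_d -> 'F_p}) (a : 'I_d -> int) :
  exists2 c, res c = rho & forall i, c i <= a i.
Proof.
exists (fun i => a i - ((a i - (rho i : nat)%:Z) %% p)%Z).
  apply/ffunP => i; rewrite !ffunE intrB intr_modz_Fp intrB opprB addrC subrK.
  by rewrite -pmulrn natr_Zp.
move=> i; rewrite gerBl modz_ge0 //; have := prime_gt0 p_prime; lia.
Qed.

Lemma res_shift (a b c : 'I_d -> int) :
  res a = res b -> res (fun i => a i - b i + c i) = res c.
Proof.
move=> /ffunP eq_ab; apply/ffunP => i; have := eq_ab i; rewrite !ffunE.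
by rewrite intrD intrB => ->; rewrite subrr add0r.
Qed.

Lemma res_inj_small (a b : 'I_d -> int) :
  res a = res b -> (forall i, (absz (a i - b i) < p)%N) -> forall i, a i = b i.
Proof.
move=> /ffunP eq_ab small i.
have dvd_p : (p %| absz (a i - b i))%N.
  have := eq_ab i; rewrite !ffunE => /eqP.
  by rewrite -subr_eq0 -intrB -(dvdz_pcharf (pchar_Fp p_prime)).
case: (posnP (absz (a i - b i))) => [/eqP | pos]; last first.
  by have := dvdn_leq pos dvd_p; have := small i; lia.
by rewrite absz_eq0 subr_eq0 => /eqP.
Qed.

End Residues.

Definition covers (d : nat) (W M : vset d) : Prop :=
  forall x, exists m w, M m /\ W w /\ x = m + w.

Section Lattice.
Variables (d : nat) (u : 'I_d -> vec d).

Definition zcomb (c : 'I_d -> int) : vec d := \sum_(i < d) c i *: u i.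

Lemma zcombD (a b : 'I_d -> int) : zcomb (fun i => a i + b i) = zcomb a + zcomb b.
Proof. by rewrite -big_split; apply: eq_bigr => i _; rewrite scalerDl. Qed.

Lemma zcombB (a b : 'I_d -> int) : zcomb (fun i => a i - b i) = zcomb a - zcomb b.
Proof. by rewrite -sumrB; apply: eq_bigr => i _; rewrite scalerBl. Qed.

Lemma zcomb0 : zcomb (fun=> 0) = 0.
Proof. by rewrite /zcomb big1 // => i _; rewrite scale0r. Qed.

Definition zcombn (c : 'I_d -> nat) : vec d := zcomb (fun i => (c i)%:Z).

Lemma zcombnD (a b : 'I_d -> nat) : zcombn (fun i => a i + b i)%N = zcombn a + zcombn b.
Proof. by rewrite /zcombn -zcombD; apply: eq_bigr => i _; rewrite PoszD. Qed.

Lemma inL_add (x y : vec d) : inL u x -> inL u y -> inL u (x + y).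
Proof. by move=> [a ->] [b ->]; exists (fun i => a i + b i); rewrite [RHS]zcombD. Qed.

Hypothesis u_indep : Zindep u.

Lemma zcomb_inj (a b : 'I_d -> int) : zcomb a = zcomb b -> forall i, a i = b i.
Proof.
move=> eq_ab i; apply/eqP; rewrite -subr_eq0; apply/eqP.
by apply: (u_indep (c := fun j => a j - b j)); rewrite -/(zcomb _) zcombB eq_ab subrr.
Qed.

Lemma coef_bounded (X : seq (vec d)) : exists B : nat,
  forall x k, x \in X -> x = zcomb k -> forall i, (absz (k i) <= B)%N.
Proof.
elim: X => [|x X [B leB]]; first by exists 0%N.
case: (classic (exists k0, x = zcomb k0)) => [[k0 x_k0] | x_notin].
  exists (maxn B (\max_i absz (k0 i))) => y k; rewrite inE => /orP[/eqP -> | yX] y_k i.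
    rewrite (zcomb_inj (etrans (esym y_k) x_k0)) leq_max.
    by rewrite (leq_bigmax (F := fun i => absz (k0 i))) orbT.
  by rewrite leq_max (leB y k yX y_k).
exists B => y k; rewrite inE => /orP[/eqP -> | yX] y_k; last exact: leB y k yX y_k.
by case: x_notin; exists k.
Qed.

End Lattice.

Section Descent.
Variables (d : nat) (u : 'I_d -> vec d) (W : vset d) (F : seq (vec d)).
Hypothesis u_indep : Zindep u.
Hypothesis W_sub_FP : forall x, W x -> exists2 f, f \in F & inP u (x - f).

Lemma ex_calW_congr (g : vec d) :
  W g -> transl_P_sub u W g -> exists v, calW u W v /\ inL u (g - v).
Proof.
move=> Wg g_P.
(* The deepest point of (g - P) inside W \ scrW lies in calW; the depth is
   bounded because W lies in F + P. *)
pose Q c := W (g - zcombn u c) /\ ~ scrW u W (g - zcombn u c).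
have [B leB] := coef_bounded u_indep [seq g - f | f <- F].
have Q_bounded c : Q c -> (\sum_i c i <= \sum_(i < d) B)%N.
  move=> [Wgc _]; have [f fF [e gcfe]] := W_sub_FP Wgc.
  change (g - zcombn u c - f = zcombn u e) in gcfe.
  have g_f : g - f = zcombn u (fun i => c i + e i)%N.
    by rewrite zcombnD -gcfe [RHS]addrC addrAC subrK.
  apply: leq_sum => i _; apply: leq_trans (leB _ _ (map_f _ fF) g_f i).
  exact: leq_addr.
have Q0 : Q (fun=> 0%N).
  by rewrite /Q /zcombn zcomb0 subr0; split => // -[_]; apply.
have [c Qc max_c] := ex_max_measure Q0 Q_bounded.
exists (g - zcombn u c); split; last by exists (fun i => (c i)%:Z); rewrite subKr.
split=> // v'; split=> [[[c' v_v'] Qv'] | ->]; last first.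
  by split=> //; exists (fun=> 0%N); rewrite subrr [RHS]zcomb0.
change (g - zcombn u c - v' = zcombn u c') in v_v'.
have Qcc' : Q (fun i => c i + c' i)%N.
  by rewrite /Q zcombnD opprD addrA -v_v' subKr.
have := max_c _ Qcc'; rewrite big_split /= -[X in (_ <= X)%N]addn0 leq_add2l.
rewrite leqn0 sum_nat_eq0 => /forallP c'0.
apply/eqP; rewrite -subr_eq0 -oppr_eq0 opprB v_v' -(zcomb0 u).
by apply/eqP; apply: eq_bigr => i _; rewrite (eqP (c'0 i)).
Qed.

End Descent.

Section MinimalComplement.
Variables (d : nat) (u : 'I_d -> vec d) (W : vset d) (F E : seq (vec d)).
Variables (s0 : vec d) (p : nat).
Hypothesis u_indep : Zindep u.
Hypothesis W_sub_FP : forall x, W x -> exists2 f, f \in F & inP u (x - f).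
Hypothesis scrW_sub_E : forall x, W x -> ~ transl_P_sub u W x -> x \in E.
Hypothesis s0_scrW1 : scrW1 u W s0.
Hypothesis p_prime : prime p.
Hypothesis p_gt_E : forall e1 e2 k, e1 \in E -> e2 \in E -> e1 - e2 = zcomb u k ->
  forall i, (absz (k i) < p)%N.

Definition Mres (r : {set {ffun 'I_d -> 'F_p}}) (x : vec d) : Prop :=
  exists c, x = zcomb u c /\ res p c \in r.

Definition separates (r : {set {ffun 'I_d -> 'F_p}}) (rho : {ffun 'I_d -> 'F_p})
    (x : vec d) : Prop :=
  (forall c w, res p c \in r -> W w -> x = zcomb u c + w -> res p c = rho) /\
  (forall g, W g -> transl_P_sub u W g -> ~ inL u (x - g)).

Lemma Mres_setT_covers :
  (forall x, exists2 v, W v & inL u (x - v)) -> covers W (Mres setT).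
Proof.
move=> cover x; have [v Wv [c x_v]] := cover x.
by exists (x - v), v; split; [exists c; rewrite in_setT | rewrite subrK].
Qed.

Lemma separates_exceptional r rho x w :
  separates r rho x -> W w -> inL u (x - w) -> w \in E.
Proof. by move=> [_ x_good] Ww x_w; apply: scrW_sub_E => // w_P; apply: x_good x_w. Qed.

Lemma separates_mem r rho x (M' : vset d) :
  (forall m, M' m -> Mres r m) -> covers W M' -> covers W (Mres r) ->
  separates r rho x -> forall c0, res p c0 = rho -> M' (zcomb u c0).
Proof.
move=> M'_sub M'_cov cov sep c0 c0_rho.
have [_ [w1 [[c1 [-> c1_r]] [Ww1 x_1]]]] := cov x.
have c1_rho := sep.1 _ _ c1_r Ww1 x_1.
have w1E : w1 \in E.
  by apply: separates_exceptional sep Ww1 _; exists c1; rewrite x_1 addrK.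
have [m' [w' [M'm' [Ww' c0_w1]]]] := M'_cov (zcomb u c0 + w1).
have [c' [m'_c' c'_r]] := M'_sub _ M'm'.
have x_w' : x = zcomb u (fun i => c1 i - c0 i + c' i) + w'.
  by rewrite zcombD zcombB -m'_c' x_1 -addrA -c0_w1 addrA subrK.
have shift_c' := res_shift c' (etrans c1_rho (esym c0_rho)).
have c'_rho : res p c' = rho by rewrite -shift_c'; apply: sep.1 Ww' x_w'; rewrite shift_c'.
have w'E : w' \in E.
  by apply: separates_exceptional sep Ww' _; eexists; rewrite x_w' addrK.
have w'_w1 : w' - w1 = zcomb u (fun i => c0 i - c' i).
  have -> : w' = zcomb u c0 + w1 - m' by rewrite c0_w1 [m' + w']addrC addrK.
  by rewrite zcombB -m'_c' addrAC addrK.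
have c0_c' := res_inj_small p_prime (etrans c0_rho (esym c'_rho))
  (p_gt_E w'E w1E w'_w1).
by rewrite m'_c' in M'm'; congr M' : M'm'; apply: eq_bigr => i _; rewrite c0_c'.
Qed.

Lemma ex_separates (r : {set {ffun 'I_d -> 'F_p}}) rho :
  (forall rho', rho' \in r -> ~ covers W (Mres (r :\ rho'))) -> rho \in r ->
  exists x, separates r rho x.
Proof.
move=> min_r rho_r.
case: (classic (exists2 rho', rho' \in r & rho' != rho)) => [[rho' rho'_r rho'_ne] | single].
  have [x x_unc] := not_all_ex_not _ _ (min_r rho rho_r).
  exists x; split=> [c w c_r Ww x_cw | g Wg g_P [a x_g]].
    apply: NNPP => c_ne; apply: x_unc; exists (zcomb u c), w; split=> //.
    by exists c; rewrite in_setD1 c_r andbT; split=> //; apply/eqP.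
  have [c c_rho' c_a] := res_below p_prime rho' a.
  apply: x_unc; exists (zcomb u c), (g + zcombn u (fun i => absz (a i - c i))).
  split; first by exists c; rewrite in_setD1 c_rho' rho'_ne rho'_r.
  split; first by apply: g_P; eexists.
  have -> : zcombn u (fun i => absz (a i - c i)) = x - g - zcomb u c.
    by rewrite x_g -zcombB; apply: eq_bigr => i _; rewrite gez0_abs // subr_ge0.
  by rewrite addrCA !subrKC.
exists s0; split=> [c w c_r _ _ | g Wg g_P s0_g].
  by apply: NNPP => c_ne; apply: single; exists (res p c) => //; apply/eqP.
have [v [v_calW g_v]] := ex_calW_congr u_indep W_sub_FP Wg g_P.
have [_ s0_not_congr] := s0_scrW1; apply: s0_not_congr v_calW _.
by rewrite -(subrKA g); apply: inL_add.
Qed.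

Lemma Mres_minimal_complement (r : {set {ffun 'I_d -> 'F_p}}) :
  covers W (Mres r) -> (forall rho, rho \in r -> ~ covers W (Mres (r :\ rho))) ->
  is_minimal_complement W (Mres r).
Proof.
move=> cov min_r; split.
  by split=> //; have [m [w [Mm _]]] := cov 0; exists m.
move=> [M' [M'_sub [[_ [[c0 [-> c0_r]] M'_c0]] [_ M'_cov]]]].
have [x sep] := ex_separates min_r c0_r.
exact/M'_c0/(separates_mem M'_sub M'_cov cov sep).
Qed.

End MinimalComplement.

Theorem corollary4p14 (d : nat) (u : 'I_d -> vec d) (W : vset d) :
  (0 < d)%N ->
  Zindep u ->
  eventually_periodic u W ->
  (exists w, scrW1 u W w) ->
  (forall x : vec d, exists v, (calW u W v \/ scrW1 u W v) /\ inL u (x - v)) ->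
  exists M : vset d, is_minimal_complement W M.
Proof.
move=> _ u_indep [_ [[F [_ W_sub_FP]] [E scrW_sub_E]]] [s0 s0_scrW1] cover.
have [B leB] := coef_bounded u_indep [seq e1 - e2 | e1 <- E, e2 <- E].
have [p ltBp p_prime] := prime_above B.
have p_gt_E e1 e2 k : e1 \in E -> e2 \in E -> e1 - e2 = zcomb u k ->
    forall i, (absz (k i) < p)%N.
  by move=> e1E e2E e_k i; apply: leq_ltn_trans ltBp; apply: leB e_k i; apply: allpairs_f.
have covT : covers W (Mres (p := p) u setT).
  apply: Mres_setT_covers => x; have [v [W_v x_v]] := cover x.
  by exists v => //; case: W_v => [[[]] | [[]]].
have [r cov_r min_r] := ex_setD1_minimal (Pr := fun r => covers W (Mres u r)) covT.
exists (Mres u r).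
exact: (Mres_minimal_complement u_indep W_sub_FP scrW_sub_E s0_scrW1 p_prime p_gt_E
  cov_r min_r).
Qed.
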